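(* Let $S$ be a finite nonempty set of positive integers and $s=\max S$. The minimum density of a $1$-identifying code in the distance graph $G(S)$ is achieved by a periodic set with period at most $(6s)2^{6s}$.
   Context: The distance graph $G(S)$ has vertex set $\mathbb{Z}$, with $i,j$ adjacent iff $|i-j|\in S$. For a vertex $u$, $B_r(u)$ is the set of vertices at graph distance at most $r$ from $u$ in $G(S)$. A set $A\subseteq\mathbb{Z}$ is an $r$-identifying code if for every pair of distinct vertices $u,v$, the sets $A\cap B_r(u)$ and $A\cap B_r(v)$ are nonempty and distinct. The density of $A$ is $\delta(A)=\limsup_{N\to\infty}\frac{|A\cap[-N,N]|}{2N+1}$. A set $A$ is periodic with period $p$ if $A+p=A$. *)

From Stdlib Require Import ZArith List Reals.
From Coquelicot Require Import Coquelicot.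
Import ListNotations.
Open Scope Z_scope.

Definition adj (S : list Z) (i j : Z) : Prop := In (Z.abs (i - j)) S.

Fixpoint within (S : list Z) (r : nat) (u v : Z) : Prop :=
  match r with
  | O => u = v
  | Datatypes.S r' => within S r' u v \/ exists w, within S r' u w /\ adj S w v
  end.

Definition ball (S : list Z) (r : nat) (u : Z) : Z -> Prop := fun v => within S r u v.

Definition identifying_code (S : list Z) (r : nat) (A : Z -> bool) : Prop :=
  forall u v : Z, u <> v ->
    (exists w, A w = true /\ ball S r u w) /\
    (exists w, A w = true /\ ball S r v w) /\
    ~ (forall w, (A w = true /\ ball S r u w) <-> (A w = true /\ ball S r v w)).

Definition count_in (A : Z -> bool) (N : nat) : nat :=
  length (filter A (map (fun k => Z.of_nat k - Z.of_nat N) (seq 0 (2 * N + 1)))).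

Definition density (A : Z -> bool) : Rbar :=
  LimSup_seq (fun N => (INR (count_in A N) / INR (2 * N + 1))%R).

Definition periodic (A : Z -> bool) (p : Z) : Prop :=
  forall z, A (z + p) = A z.

From Pilot Require Import Defs.
From Stdlib Require Import ZArith List Reals Lia Lra Classical Wf_nat Factorial.
From Coquelicot Require Import Coquelicot.
Import ListNotations.

(* Whether a set is a 1-identifying code can be checked on windows of length
   6s + 1.  Any stretch of length more than 2^(6s) of a code B contains two
   equal windows of length 6s at distance l <= 2^(6s); repeating the block
   between them yields a periodic code of period l, and deleting the block
   leaves a code.  Hence, for a periodic code Q of minimal density among those
   of period at most 2^(6s), induction on the length shows that every window of
   B of length n contains at least (density Q) n - O(2^(6s)) codewords. *)

Open Scope Z_scope.

Local Notation ball1 S u := (Defs.ball S 1%nat u).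

Lemma ball1_iff S u w : ball1 S u w <-> w = u \/ In (Z.abs (u - w)) S.
Proof.
  unfold Defs.ball; simpl; unfold adj; split.
  - intros [-> | [w' [-> Hadj]]]; auto.
  - intros [-> | Hadj]; [left | right; exists u]; auto.
Qed.

Lemma ball1_shift S u w u' w' :
  u - w = u' - w' -> (ball1 S u w <-> ball1 S u' w').
Proof. intros Hd; rewrite !ball1_iff, Hd; split; intros [H | H]; auto; left; lia. Qed.

Section LocalCriterion.

Variables (S : list Z) (s : Z).
Hypothesis Hs_pos : 0 < s.
Hypothesis Hs_max : forall x, In x S -> x <= s.

Lemma ball1_bounded u w : ball1 S u w -> Z.abs (w - u) <= s.
Proof.
  rewrite ball1_iff; intros [-> | Hadj]; [lia |].
  pose proof (Hs_max _ Hadj); lia.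
Qed.

(* Whether [u] and [v] are covered and separated only depends on [B] restricted
   to [u + [-3s, 3s]] when [|u - v| <= 2s]; farther apart pairs are separated by
   any codeword in the ball of [u]. *)
Lemma identifying_code_of_local_copies (A B : Z -> bool) :
  identifying_code S 1%nat A ->
  (forall t, exists t', forall i, -3 * s <= i <= 3 * s -> B (t + i) = A (t' + i)) ->
  identifying_code S 1%nat B.
Proof.
  intros HA Hcopy.
  assert (Hcover : forall u, exists w, B w = true /\ ball1 S u w).
  { intros u; destruct (Hcopy u) as [t' Ht].
    destruct (HA t' (t' + 1)) as [[w [Hw Hball]] _]; [lia |].
    pose proof (ball1_bounded _ _ Hball).
    exists (u + (w - t')); split.
    - rewrite Ht by lia; replace (t' + (w - t')) with w by lia; exact Hw.
    - rewrite (ball1_shift _ u _ t' w) by lia; exact Hball. }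
  intros u v Huv; split; [auto | split; [auto | intros Hsame]].
  destruct (Z_le_gt_dec (Z.abs (u - v)) (2 * s)) as [Hnear | Hfar].
  - destruct (Hcopy u) as [t' Ht].
    destruct (HA t' (t' + (v - u))) as [_ [_ Hsep]]; [lia |].
    apply Hsep; intros w.
    destruct (classic (ball1 S t' w \/ ball1 S (t' + (v - u)) w))
      as [Hin | Hout].
    + assert (Hw : -3 * s <= w - t' <= 3 * s)
        by (destruct Hin as [Hb | Hb]; apply ball1_bounded in Hb; lia).
      specialize (Hsame (u + (w - t'))).
      rewrite Ht, (ball1_shift _ u _ t' w), (ball1_shift _ v _ (t' + (v - u)) w)
        in Hsame by lia.
      replace (t' + (w - t')) with w in Hsame by lia; exact Hsame.
    + split; intros [_ Hb]; exfalso; apply Hout; auto.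
  - destruct (Hcover u) as [w [Hw Hu]].
    assert (Hv : ball1 S v w) by (apply (Hsame w); auto).
    apply ball1_bounded in Hu; apply ball1_bounded in Hv; lia.
Qed.

Hypothesis Hs_in : In s S.

Lemma full_identifying_code : identifying_code S 1%nat (fun _ => true).
Proof.
  assert (Hself : forall u, ball1 S u u) by (intros u; apply ball1_iff; auto).
  assert (Hstep : forall u, ball1 S u (u + s))
    by (intros u; apply ball1_iff; right; replace (Z.abs (u - (u + s))) with s by lia; auto).
  intros u v Huv; split; [eauto | split; [eauto | intros Hsame]].
  assert (Hvu : ball1 S v (u + s)) by (apply (Hsame (u + s)); auto).
  assert (Huv' : ball1 S u (v + s)) by (apply (Hsame (v + s)); auto).
  apply ball1_bounded in Hvu; apply ball1_bounded in Huv'; lia.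
Qed.

End LocalCriterion.

Fixpoint count_window (A : Z -> bool) (a : Z) (n : nat) : nat :=
  match n with
  | O => O
  | Datatypes.S n' => ((if A a then 1 else 0) + count_window A (a + 1) n')%nat
  end.

Lemma count_window_add A n m a :
  count_window A a (n + m) = (count_window A a n + count_window A (a + Z.of_nat n) m)%nat.
Proof.
  revert a; induction n as [| n IH]; intros a; simpl.
  - now rewrite Z.add_0_r.
  - rewrite IH; replace (a + 1 + Z.of_nat n) with (a + Z.pos (Pos.of_succ_nat n)) by lia.
    lia.
Qed.

Lemma count_window_le A a n : (count_window A a n <= n)%nat.
Proof.
  revert a; induction n as [| n IH]; intros a; simpl; [lia |].
  specialize (IH (a + 1)); destruct (A a); lia.
Qed.

Lemma count_window_le_mono A a n m : (n <= m)%nat ->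
  (count_window A a n <= count_window A a m)%nat.
Proof.
  intros Hnm; replace m with (n + (m - n))%nat by lia; rewrite count_window_add; lia.
Qed.

Lemma count_window_ext A B a b n :
  (forall k, 0 <= k < Z.of_nat n -> A (a + k) = B (b + k)) ->
  count_window A a n = count_window B b n.
Proof.
  revert a b; induction n as [| n IH]; intros a b Hab; simpl; auto.
  rewrite (IH (a + 1) (b + 1)).
  - specialize (Hab 0); rewrite !Z.add_0_r in Hab; rewrite Hab by lia; auto.
  - intros k Hk; rewrite <- !Z.add_assoc; apply Hab; lia.
Qed.

Lemma count_in_window A N : count_in A N = count_window A (- Z.of_nat N) (2 * N + 1).
Proof.
  unfold count_in; change (- Z.of_nat N) with (Z.of_nat 0 - Z.of_nat N).
  generalize 0%nat, (2 * N + 1)%nat; intros m n; revert m.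
  induction n as [| n IH]; intros m; simpl; auto.
  replace (Z.of_nat m - Z.of_nat N + 1) with (Z.of_nat (Datatypes.S m) - Z.of_nat N) by lia.
  destruct (A (Z.of_nat m - Z.of_nat N)); simpl; rewrite IH; reflexivity.
Qed.

Section PeriodicCount.

Variables (P : Z -> bool) (p : nat).
Hypothesis Hp : (0 < p)%nat.
Hypothesis HP : periodic P (Z.of_nat p).

Lemma count_window_period_succ a :
  count_window P (a + 1) p = count_window P a p.
Proof.
  pose proof (count_window_add P 1 p a) as Hfirst.
  pose proof (count_window_add P p 1 a) as Hlast.
  rewrite Nat.add_comm, Hfirst in Hlast; simpl in Hlast.
  rewrite HP in Hlast; replace (a + Z.of_nat 1) with (a + 1) in Hlast by lia; lia.
Qed.

Lemma count_window_period a : count_window P a p = count_window P 0 p.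
Proof.
  induction a as [| a IH | a IH] using Z.peano_ind; auto.
  - now rewrite <- Z.add_1_r, count_window_period_succ.
  - rewrite <- IH, <- (count_window_period_succ (Z.pred a)); f_equal; lia.
Qed.

Lemma count_window_periods k a :
  count_window P a (k * p) = (k * count_window P 0 p)%nat.
Proof.
  revert a; induction k as [| k IH]; intros a; simpl; auto.
  rewrite count_window_add, IH, count_window_period; lia.
Qed.

Lemma count_window_periodic_bounds a n :
  (p * count_window P a n <= count_window P 0 p * n + count_window P 0 p * p)%nat /\
  (count_window P 0 p * n <= p * count_window P a n + count_window P 0 p * p)%nat.
Proof.
  pose proof (Nat.div_mod n p ltac:(lia)); pose proof (Nat.mod_upper_bound n p ltac:(lia)).
  pose proof (count_window_le_mono P a (n / p * p) n ltac:(nia)).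
  pose proof (count_window_le_mono P a n ((n / p + 1) * p) ltac:(nia)).
  rewrite !count_window_periods in *; split; nia.
Qed.

End PeriodicCount.

Fixpoint bool_lists (K : nat) : list (list bool) :=
  match K with
  | O => [[]]
  | Datatypes.S K' => map (cons true) (bool_lists K') ++ map (cons false) (bool_lists K')
  end.

Lemma length_bool_lists K : length (bool_lists K) = (2 ^ K)%nat.
Proof. induction K; simpl; auto; rewrite length_app, !length_map; lia. Qed.

Lemma in_bool_lists K l : length l = K -> In l (bool_lists K).
Proof.
  revert l; induction K as [| K IH]; intros [| b l] Hl; simpl in *; try lia; auto.
  apply in_or_app; destruct b; [left | right]; apply in_map, IH; lia.
Qed.

Lemma pigeonhole_nat {T} (f : nat -> T) (l : list T) (L : nat) :
  (forall j, (j <= L)%nat -> In (f j) l) -> (length l <= L)%nat ->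
  exists i j, (i < j <= L)%nat /\ f i = f j.
Proof.
  intros Hin Hlen; apply NNPP; intros Hinj.
  assert (Hnd : NoDup (map f (seq 0 (Datatypes.S L)))).
  { apply NoDup_map_NoDup_ForallPairs; [| apply seq_NoDup].
    intros i j Hi Hj Hf; apply in_seq in Hi, Hj.
    destruct (Nat.lt_trichotomy i j) as [Hij | [Hij | Hij]]; auto;
      exfalso; apply Hinj; [exists i, j | exists j, i]; split; auto; lia. }
  assert (Hincl : incl (map f (seq 0 (Datatypes.S L))) l).
  { intros x Hx; apply in_map_iff in Hx; destruct Hx as [j [<- Hj]].
    apply in_seq in Hj; apply Hin; lia. }
  pose proof (NoDup_incl_length Hnd Hincl); rewrite length_map, length_seq in *; lia.
Qed.

Lemma repeated_window (A : Z -> bool) (K : nat) (a : Z) :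
  exists i j, (i < j <= 2 ^ K)%nat /\
    forall k, 0 <= k < Z.of_nat K -> A (a + Z.of_nat i + k) = A (a + Z.of_nat j + k).
Proof.
  set (window := fun j => map (fun k => A (a + Z.of_nat j + Z.of_nat k)) (seq 0 K)).
  destruct (pigeonhole_nat window (bool_lists K) (2 ^ K)) as [i [j [Hij Heq]]].
  - intros j _; apply in_bool_lists; unfold window; now rewrite length_map, length_seq.
  - now rewrite length_bool_lists.
  - exists i, j; split; auto; intros k Hk.
    apply (map_ext_in_iff (f := fun k => A (a + Z.of_nat i + Z.of_nat k))) with (a := Z.to_nat k)
      in Heq; [rewrite Z2Nat.id in Heq by lia; exact Heq |].
    apply in_seq; lia.
Qed.

Definition splice (A : Z -> bool) (x p : Z) : Z -> bool :=
  fun z => if z <? x then A z else A (z + p).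

Definition periodize (A : Z -> bool) (x p : Z) : Z -> bool :=
  fun z => A (x + z mod p).

Lemma periodize_periodic A x p : 0 < p -> periodic (periodize A x p) p.
Proof.
  intros Hp z; unfold periodize.
  now rewrite <- (Z.mul_1_l p) at 1; rewrite Z_mod_plus_full.
Qed.

Lemma count_periodize A x p :
  count_window (periodize A x (Z.of_nat p)) 0 p = count_window A x p.
Proof.
  apply count_window_ext; intros k Hk; unfold periodize.
  now rewrite Z.mod_small, Z.add_0_l by lia.
Qed.

Lemma count_splice A x p a i m : x = a + Z.of_nat i ->
  count_window (splice A x p) a (i + m) =
  (count_window A a i + count_window A (x + p) m)%nat.
Proof.
  intros ->; rewrite count_window_add; f_equal; apply count_window_ext;
    intros k Hk; unfold splice.
  - now destruct (Z.ltb_spec (a + k) (a + Z.of_nat i)); [| lia].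
  - destruct (Z.ltb_spec (a + Z.of_nat i + k) (a + Z.of_nat i)); [lia |].
    f_equal; lia.
Qed.

Section CutAndPaste.

Variables (S : list Z) (s : Z).
Hypothesis Hs_pos : 0 < s.
Hypothesis Hs_max : forall x, In x S -> x <= s.

Variables (A : Z -> bool) (x p : Z).
Hypothesis Hp : 0 < p.
Hypothesis HA : identifying_code S 1%nat A.
Hypothesis Hrepeat : forall k, 0 <= k < 6 * s -> A (x + k) = A (x + p + k).

Lemma periodize_agrees k : 0 <= k < p + 6 * s -> A (x + k mod p) = A (x + k).
Proof.
  induction k as [k IH] using (well_founded_induction (Z.lt_wf 0)); intros Hk.
  destruct (Z_lt_le_dec k p) as [Hkp | Hkp].
  - now rewrite Z.mod_small by lia.
  - replace k with ((k - p) + 1 * p) at 1 by lia; rewrite Z_mod_plus_full, IH by lia.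
    replace (x + k) with (x + p + (k - p)) by lia; apply Hrepeat; lia.
Qed.

Lemma splice_identifying : identifying_code S 1%nat (splice A x p).
Proof.
  apply (identifying_code_of_local_copies S s Hs_pos Hs_max A); auto.
  intros t; unfold splice; destruct (Z_lt_le_dec (t - 3 * s) x) as [Hl | Hl].
  - exists t; intros i Hi; destruct (Z.ltb_spec (t + i) x); auto.
    replace (t + i) with (x + (t + i - x)) by lia; rewrite Hrepeat by lia.
    f_equal; lia.
  - exists (t + p); intros i Hi; destruct (Z.ltb_spec (t + i) x); [lia |].
    f_equal; lia.
Qed.

Lemma periodize_identifying : identifying_code S 1%nat (periodize A x p).
Proof.
  apply (identifying_code_of_local_copies S s Hs_pos Hs_max A); auto.
  intros t; unfold periodize; exists (x + (t - 3 * s) mod p + 3 * s); intros i Hi.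
  pose proof (Z.mod_pos_bound (t - 3 * s) p Hp).
  replace (t + i) with ((t - 3 * s) + (i + 3 * s)) by lia.
  rewrite <- Z.add_mod_idemp_l, periodize_agrees by lia; f_equal; lia.
Qed.

End CutAndPaste.

Definition period_bound (s : Z) : nat := (2 ^ Z.to_nat (6 * s))%nat.

Lemma period_bound_Z s : 0 <= s -> Z.of_nat (period_bound s) = 2 ^ (6 * s).
Proof. intros Hs; unfold period_bound; rewrite Nat2Z.inj_pow, Z2Nat.id by lia; reflexivity. Qed.

Lemma divide_fact q n : (1 <= q <= n)%nat -> Nat.divide q (fact n).
Proof.
  induction n as [| n IH]; intros Hq; [lia |]; simpl fact.
  destruct (Nat.eq_dec q (Datatypes.S n)) as [-> | Hne].
  - exists (fact n); lia.
  - destruct (IH ltac:(lia)) as [c Hc]; exists (c + n * c)%nat; rewrite Hc; lia.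
Qed.

Section MinimalDensity.

Variables (S : list Z) (s : Z).
Hypothesis Hs_pos : 0 < s.
Hypothesis Hs_max : forall x, In x S -> x <= s.
Hypothesis Hs_in : In s S.

Definition short_periodic_code (Q : Z -> bool) (q : nat) : Prop :=
  identifying_code S 1%nat Q /\ (0 < q <= period_bound s)%nat /\ periodic Q (Z.of_nat q).

Lemma exists_min_density_short_periodic_code :
  exists Q q, short_periodic_code Q q /\
    forall Q' q', short_periodic_code Q' q' ->
      (count_window Q 0 q * q' <= count_window Q' 0 q' * q)%nat.
Proof.
  set (F := fact (period_bound s)).
  assert (HF : (0 < F)%nat) by apply lt_O_fact.
  (* Every density c/q with q <= period_bound s has the form m/F with m : nat. *)
  destruct (dec_inh_nat_subset_has_unique_least_element
              (fun m => exists Q q, short_periodic_code Q q /\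
                                    (count_window Q 0 q * F = m * q)%nat)
              (fun m => classic _))
    as (m & [[Q [q [HQ Hm]]] Hleast] & _).
  { pose proof (Nat.pow_nonzero 2 (Z.to_nat (6 * s)) ltac:(lia)).
    exists F, (fun _ => true), 1%nat; split; [| simpl; lia].
    split; [apply (full_identifying_code S s); auto |].
    split; [unfold period_bound; lia | now intros z]. }
  exists Q, q; split; auto.
  intros Q' q' HQ'; pose proof HQ' as [_ [Hq' _]].
  destruct (divide_fact q' (period_bound s) ltac:(lia)) as [d Hd]; fold F in Hd.
  assert (Hm' : (m <= count_window Q' 0 q' * d)%nat).
  { apply Hleast; exists Q', q'; split; auto; rewrite Hd; lia. }
  apply (Nat.mul_le_mono_pos_r _ _ F); auto.
  transitivity (count_window Q' 0 q' * d * q * q')%nat.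
  - rewrite Nat.mul_shuffle0, Hm; now apply Nat.mul_le_mono_r, Nat.mul_le_mono_r.
  - rewrite Hd; apply Nat.eq_le_incl; ring.
Qed.

Section WindowLowerBound.

Variables (Q : Z -> bool) (q : nat).
Hypothesis Hq : (0 < q)%nat.
Hypothesis HQmin : forall Q' q', short_periodic_code Q' q' ->
  (count_window Q 0 q * q' <= count_window Q' 0 q' * q)%nat.

Lemma count_window_lower_bound n B a : identifying_code S 1%nat B ->
  (count_window Q 0 q * n <= q * count_window B a n + q * period_bound s)%nat.
Proof.
  revert B a; induction n as [n IH] using lt_wf_ind; intros B a HB.
  pose proof (count_window_le Q 0 q).
  destruct (le_lt_dec n (period_bound s)) as [Hn | Hn]; [nia |].
  destruct (repeated_window B (Z.to_nat (6 * s)) a) as [i [j [Hij Hrep]]].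
  assert (Hjn : (j < n)%nat) by (unfold period_bound in Hn; lia).
  set (x := a + Z.of_nat i); set (l := (j - i)%nat).
  assert (Hl : 0 < Z.of_nat l) by lia.
  assert (Hrep' : forall k, 0 <= k < 6 * s -> B (x + k) = B (x + Z.of_nat l + k)).
  { intros k Hk; unfold x; rewrite Hrep by lia; f_equal; lia. }
  assert (Hblock : short_periodic_code (periodize B x (Z.of_nat l)) l).
  { split; [apply (periodize_identifying S s); auto |].
    split; [unfold period_bound in *; lia | now apply periodize_periodic]. }
  apply HQmin in Hblock; rewrite count_periodize in Hblock.
  assert (Hrest := IH (i + (n - j))%nat ltac:(lia) (splice B x (Z.of_nat l)) a
                     (splice_identifying S s Hs_pos Hs_max B x _ HB Hrep')).
  rewrite (count_splice B x _ a i) in Hrest by reflexivity.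
  replace n with (i + (l + (n - j)))%nat at 2 by lia.
  rewrite !count_window_add; fold x.
  nia.
Qed.

End WindowLowerBound.

End MinimalDensity.

Open Scope R_scope.

Lemma Rdiv_lower_bound (c p k n C : R) : 0 < p -> 0 < n ->
  c * n <= p * k + p * C -> c / p + - C / n <= k / n.
Proof.
  intros Hp Hn Hle; apply Rmult_le_reg_r with (p * n); [nra |].
  replace ((c / p + - C / n) * (p * n)) with (c * n - p * C) by (field; lra).
  replace (k / n * (p * n)) with (p * k) by (field; lra); lra.
Qed.

Lemma Rdiv_upper_bound (c p k n : R) : 0 < p -> 0 < n ->
  p * k <= c * n + c * p -> k / n <= c / p + c / n.
Proof.
  intros Hp Hn Hle; apply Rmult_le_reg_r with (p * n); [nra |].
  replace ((c / p + c / n) * (p * n)) with (c * n + c * p) by (field; lra).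
  replace (k / n * (p * n)) with (p * k) by (field; lra); lra.
Qed.

Lemma is_lim_seq_window_error (mu e : R) :
  is_lim_seq (fun N => mu + e / INR (2 * N + 1)) mu.
Proof.
  assert (Hlen : is_lim_seq (fun N => INR (2 * N + 1)) p_infty).
  { apply (is_lim_seq_le_p_loc INR); [| exact is_lim_seq_INR].
    exists 0%nat; intros N _; apply le_INR; lia. }
  apply is_lim_seq_inv in Hlen; [| discriminate].
  apply (is_lim_seq_scal_l _ e) in Hlen.
  apply (is_lim_seq_plus' _ _ mu _ (is_lim_seq_const mu)) in Hlen.
  now rewrite Rmult_0_r, Rplus_0_r in Hlen.
Qed.

Lemma density_ge_of_window_bound (B : Z -> bool) (c p C : nat) : (0 < p)%nat ->
  (forall n a, c * n <= p * count_window B a n + p * C)%nat ->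
  Rbar_le (INR c / INR p) (density B).
Proof.
  intros Hp Hwin; unfold density.
  rewrite <- (is_LimSup_seq_unique _ _
    (is_lim_LimSup_seq _ _ (is_lim_seq_window_error (INR c / INR p) (- INR C)))).
  apply LimSup_le; exists 0%nat; intros N _; rewrite count_in_window.
  specialize (Hwin (2 * N + 1)%nat (- Z.of_nat N)%Z).
  apply Rdiv_lower_bound; try (apply lt_0_INR; lia).
  rewrite <- !mult_INR, <- plus_INR; now apply le_INR.
Qed.

Lemma density_periodic (P : Z -> bool) (p : nat) : (0 < p)%nat ->
  periodic P (Z.of_nat p) -> density P = INR (count_window P 0 p) / INR p.
Proof.
  intros Hp HP; set (c := count_window P 0 p).
  unfold density; apply is_LimSup_seq_unique, is_lim_LimSup_seq.
  eapply is_lim_seq_le_le;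
    [| exact (is_lim_seq_window_error (INR c / INR p) (- INR c))
     | exact (is_lim_seq_window_error (INR c / INR p) (INR c))].
  intros N; rewrite count_in_window.
  destruct (count_window_periodic_bounds P p Hp HP (- Z.of_nat N) (2 * N + 1))
    as [Hup Hlow]; fold c in Hup, Hlow.
  split; [apply Rdiv_lower_bound | apply Rdiv_upper_bound];
    try (apply lt_0_INR; lia); rewrite <- !mult_INR, <- plus_INR; apply le_INR; lia.
Qed.

Close Scope R_scope.

Theorem theorem5 (S : list Z) (s : Z)
  (HSne : S <> nil)
  (HSpos : forall x, In x S -> (0 < x)%Z)
  (Hs_in : In s S) (Hs_max : forall x, In x S -> (x <= s)%Z) :
  exists (A : Z -> bool) (p : Z),
    (0 < p)%Z /\ (p <= (6 * s) * 2 ^ (6 * s))%Z /\ periodic A p /\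
    identifying_code S 1 A /\
    forall B : Z -> bool, identifying_code S 1 B -> Rbar_le (density A) (density B).
Proof.
  assert (Hs : 0 < s) by auto.
  destruct (exists_min_density_short_periodic_code S s Hs Hs_max Hs_in)
    as (Q & q & [HQ [Hq HQper]] & HQmin).
  exists Q, (Z.of_nat q); split; [lia | split; [| split; [exact HQper | split; [exact HQ |]]]].
  - assert (Hqb : Z.of_nat q <= Z.of_nat (period_bound s)) by lia.
    rewrite period_bound_Z in Hqb by lia.
    pose proof (Z.pow_pos_nonneg 2 (6 * s) ltac:(lia) ltac:(lia)); nia.
  - intros B HB; rewrite (density_periodic Q q) by (auto; lia).
    apply (density_ge_of_window_bound B _ _ (period_bound s)); [lia |].
    intros n a; now apply (count_window_lower_bound S s Hs Hs_max Q q).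
Qed.
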